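(* Let $\mathcal{H}$ be a complex Hilbert space, let $N(\cdot)$ be a weakly unitarily invariant algebra norm on $\mathbb{B}(\mathcal{H})$, and let $T$ and $S$ be self-adjoint operators in $\mathbb{B}(\mathcal{H})$ with $\|T\|\le 1$ and $\|S\|\le 1$. Then, for each choice of sign, $$w_{N}(TS \pm ST) \leq \min\{w_{N}(T), w_{N}(S)\}\sup_{U\in\mathcal{U}}\big\{N(U) + N(U^* )\big\}.$$ In particular, if $N(\cdot)$ is a weakly unitarily invariant self-adjoint algebra norm, then $$w_{N}(TS \pm ST) \leq 2\min\{N(T), N(S)\}\sup_{U\in\mathcal{U}}N(U).$$
   Context: $\mathbb{B}(\mathcal{H})$ is the algebra of bounded linear operators on $\mathcal{H}$, $\|\cdot\|$ the usual operator norm, and $\mathcal{U}$ the group of unitary operators in $\mathbb{B}(\mathcal{H})$. A norm $N(\cdot)$ on $\mathbb{B}(\mathcal{H})$ is an algebra norm if $N(TS)\le N(T)N(S)$ for all $T,S$; self-adjoint if $N(T^* )=N(T)$ for all $T$; weakly unitarily invariant if $N(U^*TU)=N(T)$ for all $T\in\mathbb{B}(\mathcal{H})$, $U\in\mathcal{U}$. For $A\in\mathbb{B}(\mathcal{H})$, ${\rm Re}(A)=\frac{A+A^*}{2}$. The generalized numerical radius is $w_N(T)=\sup_{\theta\in\mathbb{R}} N\big({\rm Re}(e^{i\theta}T)\big)$. *)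

From HB Require Import structures.
From mathcomp Require Import all_boot all_order all_algebra.
From mathcomp Require Import complex.
From mathcomp Require Import boolp classical_sets reals ereal trigo.
Set Implicit Arguments. Unset Strict Implicit. Unset Printing Implicit Defensive.
Import Order.TTheory GRing.Theory Num.Theory.
Local Open Scope ring_scope.
Local Open Scope classical_set_scope.

Section Hilbert.
Variable R : realType.
Local Notation C := R[i].
Variables (V : lmodType C) (ip : V -> V -> C).

Definition hnorm (x : V) : R := Num.sqrt (complex.Re (ip x x)).

Definition is_hilbert : Prop :=
  [/\ (forall (a : C) (x y z : V), ip (a *: x + y) z = a * ip x z + ip y z),
      (forall x y : V, ip y x = conjc (ip x y)),
      (forall x : V, 0 <= complex.Re (ip x x)),
      (forall x : V, ip x x = 0 -> x = 0) &
      (forall u : nat -> V,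
         (forall e : R, 0 < e -> exists n0 : nat, forall m n : nat,
            (n0 <= m)%N -> (n0 <= n)%N -> hnorm (u m - u n) < e) ->
         exists l : V, forall e : R, 0 < e -> exists n0 : nat, forall n : nat,
            (n0 <= n)%N -> hnorm (u n - l) < e)].

Definition bounded_op (T : V -> V) : Prop :=
  (forall (a : C) (x y : V), T (a *: x + y) = a *: T x + T y) /\
  exists M : R, forall x : V, hnorm (T x) <= M * hnorm x.

Definition opnorm (T : V -> V) : R :=
  sup [set hnorm (T x) | x in [set x : V | hnorm x <= 1]].

Definition adjoint (T : V -> V) : V -> V :=
  match pselect (exists S : V -> V, forall x y : V, ip (T x) y = ip x (S y))
  with
  | left h => projT1 (cid h)
  | right _ => T
  end.

Definition op_add (T S : V -> V) : V -> V := fun x => T x + S x.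
Definition op_sub (T S : V -> V) : V -> V := fun x => T x - S x.
Definition op_scale (a : C) (T : V -> V) : V -> V := fun x => a *: T x.
Definition op_comp (T S : V -> V) : V -> V := fun x => T (S x).

Definition self_adjoint_op (T : V -> V) : Prop := adjoint T = T.

Definition unitary (U : V -> V) : Prop :=
  bounded_op U /\ op_comp (adjoint U) U = id /\ op_comp U (adjoint U) = id.

Definition ReOp (A : V -> V) : V -> V := op_scale (2%:R^-1) (op_add A (adjoint A)).

Definition is_norm_on_B (N : (V -> V) -> R) : Prop :=
  [/\ (forall T, bounded_op T -> 0 <= N T),
      (forall T, bounded_op T -> N T = 0 -> T = (fun _ => 0)),
      (forall (a : C) T, bounded_op T -> N (op_scale a T) = Normc.normc a * N T) &
      (forall T S, bounded_op T -> bounded_op S -> N (op_add T S) <= N T + N S)].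

Definition algebra_norm (N : (V -> V) -> R) : Prop :=
  is_norm_on_B N /\
  forall T S, bounded_op T -> bounded_op S -> N (op_comp T S) <= N T * N S.

Definition self_adjoint_norm (N : (V -> V) -> R) : Prop :=
  forall T, bounded_op T -> N (adjoint T) = N T.

Definition weakly_unitarily_invariant (N : (V -> V) -> R) : Prop :=
  forall T U, bounded_op T -> unitary U ->
    N (op_comp (adjoint U) (op_comp T U)) = N T.

Definition expi (t : R) : C := (cos t +i* sin t)%C.

Definition wN (N : (V -> V) -> R) (T : V -> V) : \bar R :=
  ereal_sup [set (N (ReOp (op_scale (expi t) T)))%:E | t in [set: R]].

Definition supU_sum (N : (V -> V) -> R) : \bar R :=
  ereal_sup [set (N U + N (adjoint U))%:E | U in unitary].

Definition supU (N : (V -> V) -> R) : \bar R :=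
  ereal_sup [set (N U)%:E | U in unitary].

End Hilbert.

(* A self-adjoint contraction S is the real part of a unitary: R = sqrt(1 - S^2)
   commutes with S, so U = S + iR is unitary and S = (U + U')/2 with U' the
   adjoint of U; hence N(S) <= (N(U) + N(U'))/2.  For an algebra norm
   N(TS +- ST) <= 2 N(T) N(S).  As TS +- ST is self-adjoint or skew-adjoint, each
   Re(e^{it}(TS +- ST)) is a scalar multiple of it of modulus at most 1, so
   w_N(TS +- ST) <= N(TS +- ST); and w_N(T) >= N(Re T) = N(T) for self-adjoint T.

   Completeness of H is used twice: the Riesz representation theorem (through a
   nearest point of a hyperplane) provides adjoints of bounded operators, and
   Y = 1 - R is the operator-norm limit of Y_{n+1} = (S^2 + Y_n^2)/2, Y_0 = 0,
   whose increments are dominated by those of the scalar iteration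
   b_{n+1} = (1 + b_n^2)/2, b_0 = 0, which increases to 1 at rate O(1/n). *)

From HB Require Import structures.
From mathcomp Require Import all_boot all_order all_algebra.
From mathcomp Require Import complex.
From mathcomp Require Import boolp classical_sets reals ereal trigo.
From mathcomp Require Import ring lra.
Import Order.TTheory GRing.Theory Num.Theory.
Local Open Scope ring_scope.

Section LinearMaps.
Context {K : pzRingType} {U W : lmodType K} {f : U -> W}.
Hypothesis flin : linear f.

Lemma lin0 : f 0 = 0.
Proof.
have f00 := flin 1 0 0; rewrite !scale1r !addr0 in f00.
by apply: (addrI (f 0)); rewrite addr0 -f00.
Qed.

Lemma linD x y : f (x + y) = f x + f y.
Proof. by have := flin 1 x y; rewrite !scale1r. Qed.

Lemma linZ a x : f (a *: x) = a *: f x.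
Proof. by rewrite -[a *: x]addr0 flin lin0 addr0. Qed.

Lemma linN x : f (- x) = - f x.
Proof. by rewrite -scaleN1r linZ scaleN1r. Qed.

Lemma linB x y : f (x - y) = f x - f y.
Proof. by rewrite linD linN. Qed.

End LinearMaps.

Section Rate.
Context {R : realType}.

Definition rate (n : nat) : R := n.+1%:R^-1.

Lemma rate_gt0 n : 0 < rate n.
Proof. by rewrite invr_gt0 ltr0Sn. Qed.

Lemma rate_ge0 n : 0 <= rate n.
Proof. exact/ltW/rate_gt0. Qed.

Lemma rate_le1 n : rate n <= 1.
Proof. by rewrite invf_le1 ?ltr0Sn // ler1n. Qed.

Lemma rate_le {m n} : (m <= n)%N -> rate n <= rate m.
Proof. by move=> le_mn; rewrite lef_pV2 ?posrE ?ltr0Sn // ler_nat. Qed.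

Lemma rate_small (K e : R) : 0 < e -> exists n0, forall n, (n0 <= n)%N -> K * rate n < e.
Proof.
move=> e_gt0; exists (Num.Def.archi_bound (`|K| / e)) => n le_n0n.
have le_n0 : (Num.Def.archi_bound (`|K| / e))%:R <= n.+1%:R :> R by rewrite ler_nat leqW.
have := archi_boundP (divr_ge0 (normr_ge0 K) (ltW e_gt0)).
rewrite ltr_pdivrMr // => lt_K.
rewrite -ltr_pdivlMr ?rate_gt0 // invrK mulrC.
exact: le_lt_trans (ler_norm K) (lt_le_trans lt_K (ler_wpM2r (ltW e_gt0) le_n0)).
Qed.

Lemma ler_rate (r K : R) : (forall n, r <= K * rate n) -> r <= 0.
Proof.
move=> le_r; rewrite leNgt; apply/negP => /rate_small-/(_ K) [n0 lt_r].
by have := lt_r n0 (leqnn n0); rewrite ltNge le_r.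
Qed.

Lemma normr_le_rate (r K : R) : (forall n, `|r| <= K * rate n) -> r = 0.
Proof. by move=> /ler_rate; rewrite normr_le0 => /eqP. Qed.

End Rate.

Lemma halfDhalf (F : numFieldType) : 2%:R^-1 + 2%:R^-1 = 1 :> F.
Proof. by rewrite -div1r -splitr. Qed.

Section ScalarIteration.
Context {R : realType}.

(* [sqrt_iter] below run on the scalar 1: it majorizes the operator iteration. *)
Fixpoint iter_bound (n : nat) : R :=
  if n is n'.+1 then 2^-1 * (1 + iter_bound n' ^+ 2) else 0.

Lemma iter_bound_ge0 n : 0 <= iter_bound n.
Proof. by case: n => //= n; rewrite mulr_ge0 ?invr_ge0 ?addr_ge0 ?sqr_ge0. Qed.

Lemma iter_bound_le1 n : iter_bound n <= 1.
Proof.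
elim: n => [|n IH] /=; first exact: ler01.
by rewrite mulrC ler_pdivrMr ?ltr0n // mul1r; have := iter_bound_ge0 n; nra.
Qed.

Lemma iter_bound_le_succ n : iter_bound n <= iter_bound n.+1.
Proof.
rewrite /= mulrC ler_pdivlMr ?ltr0n //.
by have := iter_bound_le1 n; have := iter_bound_ge0 n; nra.
Qed.

Lemma iter_bound_rate n : 1 - iter_bound n <= 2 * rate n.
Proof.
rewrite /rate ler_pdivlMr ?ltr0Sn //.
elim: n => [|n IH]; first by rewrite /= subr0 mul1r ler1n.
rewrite -(natr1 (R := R) n.+1) [iter_bound _]/=.
have := iter_bound_ge0 n; have := iter_bound_le1 n; have : 1 <= n.+1%:R :> R by rewrite ler1n.
move: IH; set N := n.+1%:R; set b := iter_bound n => IH N1 b1 b0.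
have : 0 <= (2 - (1 - b) * N) * (2 - (1 - b)) by apply: mulr_ge0; lra.
nra.
Qed.

End ScalarIteration.

Section ExtendedBounds.
Context {R : realType}.
Local Open Scope ereal_scope.

Lemma lee_min_mul {z A B X : \bar R} {a b u v : R} :
  a%:E <= A -> b%:E <= B -> u%:E <= X -> v%:E <= X ->
  (0 <= a)%R -> (0 <= b)%R -> (0 <= u)%R -> (0 <= v)%R ->
  z <= (a * u)%:E -> z <= (b * v)%:E -> z <= Order.min A B * X.
Proof.
move=> aA bB uX vX a0 b0 u0 v0 zau zbv; have [_|_] := leP A B.
  by apply: le_trans zau _; rewrite EFinM lee_pmul ?lee_fin.
by apply: le_trans zbv _; rewrite EFinM lee_pmul ?lee_fin.
Qed.

End ExtendedBounds.

Section ComplexFacts.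
Local Open Scope complex_scope.
Context {R : realType}.
Local Notation C := R[i].
Local Notation normc := Normc.normc.
Local Notation Re := complex.Re.
Local Notation Im := complex.Im.

Lemma complexP (z w : C) : Re z = Re w -> Im z = Im w -> z = w.
Proof. by case: z w => a b [c d] /= -> ->. Qed.

Lemma ReD (z w : C) : Re (z + w) = Re z + Re w.
Proof. by case: z w => a b []. Qed.

Lemma ImD (z w : C) : Im (z + w) = Im z + Im w.
Proof. by case: z w => a b []. Qed.

Lemma ReN (z : C) : Re (- z) = - Re z.
Proof. by case: z. Qed.

Lemma Re_realM (r : R) (z : C) : Re (r%:C * z) = r * Re z.
Proof. by case: z => a b /=; rewrite mul0r subr0. Qed.

Lemma normc_real (r : R) : normc r%:C = `|r|.
Proof. by rewrite /Normc.normc /= expr0n /= addr0 sqrtr_sqr. Qed.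

Lemma normc_ge0 (z : C) : 0 <= normc z.
Proof. by case: z => a b; apply: sqrtr_ge0. Qed.

Lemma normc_conj (z : C) : normc (conjc z) = normc z.
Proof. by case: z => a b; rewrite /Normc.normc /= sqrrN. Qed.

Lemma half_add : (2^-1 : R)%:C + (2^-1 : R)%:C = 1.
Proof. by rewrite -rmorphD /= halfDhalf. Qed.

Lemma normc_half : normc (2%:R^-1 : C) = 2^-1.
Proof. by rewrite -(rmorph_nat (real_complex R)) -fmorphV normc_real ger0_norm ?invr_ge0. Qed.

Lemma conjc_i : conjc 'i%C = - 'i%C :> C.
Proof. by apply: complexP => /=; rewrite ?oppr0. Qed.

Lemma mulii : 'i%C * 'i%C = -1 :> C.
Proof. by rewrite -expr2 sqr_i. Qed.

Lemma normcN1 : normc (-1 : C) = 1.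
Proof. by rewrite normcN Normc.normc1. Qed.

Lemma normc_i : normc 'i%C = 1 :> R.
Proof. by rewrite /Normc.normc /= expr0n /= add0r expr1n sqrtr1. Qed.

Lemma normc_expi (t : R) : normc (expi t) = 1.
Proof. by rewrite /Normc.normc /expi /= cos2Dsin2 sqrtr1. Qed.

End ComplexFacts.

Section Hilbert.
Local Open Scope complex_scope.
Context {R : realType}.
Local Notation C := R[i].
Local Notation normc := Normc.normc.
Local Notation Re := complex.Re.
Local Notation Im := complex.Im.
Context {V : lmodType C} {ip : V -> V -> C}.
Local Notation nm := (hnorm ip).

Hypothesis hH : is_hilbert ip.

Let ipDZl : forall (a : C) (x y z : V), ip (a *: x + y) z = a * ip x z + ip y z.
Proof. by case: hH. Qed.

Let ipC : forall x y : V, ip y x = conjc (ip x y).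
Proof. by case: hH. Qed.

Let ipxx_ge0 : forall x : V, 0 <= Re (ip x x).
Proof. by case: hH. Qed.

Let ipxx_eq0 : forall x : V, ip x x = 0 -> x = 0.
Proof. by case: hH. Qed.

Lemma ip_linear z : linear (ip^~ z).
Proof. by move=> a x y; apply: ipDZl. Qed.

Lemma ipD x y z : ip (x + y) z = ip x z + ip y z.
Proof. exact: (linD (ip_linear z)). Qed.

Lemma ip0l z : ip 0 z = 0.
Proof. exact: (lin0 (ip_linear z)). Qed.

Lemma ipZ a x z : ip (a *: x) z = a * ip x z.
Proof. exact: (linZ (ip_linear z)). Qed.

Lemma ipN x z : ip (- x) z = - ip x z.
Proof. exact: (linN (ip_linear z)). Qed.

Lemma ipB x y z : ip (x - y) z = ip x z - ip y z.
Proof. exact: (linB (ip_linear z)). Qed.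

Lemma ipDr x y z : ip z (x + y) = ip z x + ip z y.
Proof. by rewrite ipC ipD rmorphD /= -!ipC. Qed.

Lemma ipZr a x z : ip z (a *: x) = conjc a * ip z x.
Proof. by rewrite ipC ipZ rmorphM /= -ipC. Qed.

Lemma ip0r z : ip z 0 = 0.
Proof. by rewrite -(scale0r 0) ipZr rmorph0 mul0r. Qed.

Lemma ipNr x z : ip z (- x) = - ip z x.
Proof. by rewrite -scaleN1r ipZr rmorphN1 mulN1r. Qed.

Lemma ipBr x y z : ip z (x - y) = ip z x - ip z y.
Proof. by rewrite ipDr ipNr. Qed.

Lemma Re_ipC x y : Re (ip y x) = Re (ip x y).
Proof. by rewrite ipC; case: (ip x y). Qed.

Lemma nm_ge0 x : 0 <= nm x.
Proof. exact: sqrtr_ge0. Qed.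

Lemma nm_sq x : nm x ^+ 2 = Re (ip x x).
Proof. by rewrite sqr_sqrtr. Qed.

Lemma ipxx x : ip x x = (nm x ^+ 2)%:C.
Proof.
apply: complexP; first by rewrite nm_sq.
have := ipC x x; case: (ip x x) => a b /= [] /eqP.
by rewrite -subr_eq0 opprK -mulr2n mulrn_eq0 => /eqP.
Qed.

Lemma nm_sqD x y : nm (x + y) ^+ 2 = nm x ^+ 2 + 2 * Re (ip x y) + nm y ^+ 2.
Proof. by rewrite !nm_sq ipD !ipDr !ReD (Re_ipC x y); ring. Qed.

Lemma nm_sqB x y : nm (x - y) ^+ 2 = nm x ^+ 2 - 2 * Re (ip x y) + nm y ^+ 2.
Proof. by rewrite nm_sqD ipNr ReN !nm_sq ipN ipNr opprK; ring. Qed.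

Lemma nmZ a x : nm (a *: x) = normc a * nm x.
Proof.
rewrite {1}/hnorm ipZ ipZr mulrA ipxx; case: a => a b.
have -> : Re ((a +i* b) * (a +i* b)^* * (nm x ^+ 2)%:C) = (a ^+ 2 + b ^+ 2) * nm x ^+ 2.
  by rewrite /=; ring.
by rewrite sqrtrM ?addr_ge0 ?sqr_ge0 // sqrtr_sqr ger0_norm ?nm_ge0.
Qed.

Lemma nm0 : nm 0 = 0.
Proof. by rewrite /hnorm ip0l sqrtr0. Qed.

Lemma nm_eq0 x : nm x = 0 -> x = 0.
Proof. by move=> nx0; apply: ipxx_eq0; rewrite ipxx nx0 expr0n. Qed.

Lemma nmN x : nm (- x) = nm x.
Proof. by rewrite -scaleN1r nmZ normcN1 mul1r. Qed.

Lemma nmBC x y : nm (x - y) = nm (y - x).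
Proof. by rewrite -nmN opprB. Qed.

Lemma nm_scalei x : nm ('i%C *: x) = nm x.
Proof. by rewrite nmZ normc_i mul1r. Qed.

Lemma Re_ip_le x y : `|Re (ip x y)| <= nm x * nm y.
Proof.
have [y0|ny_neq0] := eqVneq (nm y) 0.
  by rewrite (nm_eq0 _ y0) ip0r normr0 nm0 mulr0.
have ny2_gt0 : 0 < nm y ^+ 2 by rewrite exprn_gt0 // lt_neqAle eq_sym ny_neq0 nm_ge0.
set r := Re (ip x y).
have := sqr_ge0 (nm (x - (r / nm y ^+ 2)%:C *: y)).
rewrite nm_sqB nmZ normc_real ipZr conjc_real Re_realM -/r exprMn (real_normK (num_real _)).
rewrite -(ler_pM2r ny2_gt0) mul0r.
have -> : (nm x ^+ 2 - 2 * (r / nm y ^+ 2 * r) + (r / nm y ^+ 2) ^+ 2 * nm y ^+ 2) * nm y ^+ 2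
    = nm x ^+ 2 * nm y ^+ 2 - r ^+ 2 by field.
rewrite subr_ge0 -exprMn -(real_normK (num_real r)) => CS.
by rewrite -(ler_pXn2r (n := 2)) ?nnegrE ?mulr_ge0 ?nm_ge0.
Qed.

Lemma Im_ip_le x y : `|Im (ip x y)| <= nm x * nm y.
Proof.
have -> : Im (ip x y) = Re (ip x ('i%C *: y)).
  by rewrite ipZr; case: (ip x y) => a b /=; rewrite !mul0r; lra.
by rewrite -(nm_scalei y) Re_ip_le.
Qed.

Lemma nmD x y : nm (x + y) <= nm x + nm y.
Proof.
rewrite -(ler_pXn2r (n := 2)) ?nnegrE ?addr_ge0 ?nm_ge0 // nm_sqD sqrrD.
have := ler_norm (Re (ip x y)); have := Re_ip_le x y; lra.
Qed.

Lemma nmB x y : nm (x - y) <= nm x + nm y.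
Proof. by rewrite -(nmN y) nmD. Qed.

Lemma nm_tri x y z : nm (x - z) <= nm (x - y) + nm (y - z).
Proof. by rewrite -[x - z](subrKA y) nmD. Qed.

Lemma bounded_op_linear {T} : bounded_op ip T -> linear T.
Proof. by case. Qed.

Lemma bounded_op_bound {T} : bounded_op ip T ->
  exists2 M, 0 <= M & forall x, nm (T x) <= M * nm x.
Proof.
case=> _ [M leM]; exists `|M| => // x.
exact: le_trans (leM x) (ler_wpM2r (nm_ge0 x) (ler_norm M)).
Qed.

Lemma bounded_op_comp {T S} :
  bounded_op ip T -> bounded_op ip S -> bounded_op ip (op_comp T S).
Proof.
move=> bT bS; have [MT MT0 leT] := bounded_op_bound bT.
have [MS _ leS] := bounded_op_bound bS.
split=> [a x y|]; first by rewrite /op_comp (bounded_op_linear bS) (bounded_op_linear bT).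
exists (MT * MS) => x; rewrite -mulrA.
exact: le_trans (leT _) (ler_wpM2l MT0 (leS x)).
Qed.

Lemma bounded_op_add {T S} :
  bounded_op ip T -> bounded_op ip S -> bounded_op ip (op_add T S).
Proof.
move=> bT bS; have [MT _ leT] := bounded_op_bound bT.
have [MS _ leS] := bounded_op_bound bS.
split=> [a x y|]; first by rewrite /op_add (bounded_op_linear bS) (bounded_op_linear bT) scalerDr addrACA.
exists (MT + MS) => x; rewrite mulrDl.
exact: le_trans (nmD _ _) (lerD (leT x) (leS x)).
Qed.

Lemma bounded_op_scale a {T} : bounded_op ip T -> bounded_op ip (op_scale a T).
Proof.
move=> bT; have [M _ leM] := bounded_op_bound bT.
split=> [b x y|]; first by rewrite /op_scale (bounded_op_linear bT) scalerDr !scalerA mulrC.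
exists (normc a * M) => x; rewrite /op_scale nmZ -mulrA.
by apply: ler_wpM2l; [exact: normc_ge0 | exact: leM].
Qed.

Lemma op_subE (T S : V -> V) : op_sub T S = op_add T (op_scale (-1) S).
Proof. by apply: funext => x; rewrite /op_add /op_scale scaleN1r. Qed.

Lemma bounded_op_sub {T S} :
  bounded_op ip T -> bounded_op ip S -> bounded_op ip (op_sub T S).
Proof. by move=> bT bS; rewrite op_subE; apply/bounded_op_add/bounded_op_scale. Qed.

Lemma Re_ip_eq0_of_min z k :
  (forall t : R, nm z <= nm (z + t%:C *: k)) -> Re (ip z k) = 0.
Proof.
move=> z_min; set r := Re (ip z k); set K := nm k ^+ 2.
have K_ge0 : 0 <= K by rewrite sqr_ge0.
set s := (K + 1)^-1.
have s_gt0 : 0 < s by rewrite invr_gt0 ltr_wpDl.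
have sK : s * (K + 1) = 1 by rewrite mulVf // gt_eqF // ltr_wpDl.
have := z_min (- r * s).
rewrite -(ler_pXn2r (n := 2)) ?nnegrE ?nm_ge0 // nm_sqD nmZ ipZr conjc_real Re_realM.
rewrite normc_real exprMn (real_normK (num_real _)) -/r -/K => le_z.
have : r ^+ 2 * s * (s * K - 2) >= 0 by nra.
have : r ^+ 2 * s * (s * K - 2) <= - (r ^+ 2 * s) by nra.
by move=> *; apply/eqP; rewrite -sqrf_eq0 eq_le sqr_ge0 andbT; nra.
Qed.

Lemma ip_eq0_of_min z k : (forall c : C, nm z <= nm (z + c *: k)) -> ip k z = 0.
Proof.
move=> z_min; rewrite ipC -conjc0; congr conjc.
apply: complexP; first by apply: Re_ip_eq0_of_min => t; apply: z_min.
have -> : Im (ip z k) = Re (ip z ('i%C *: k)).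
  by rewrite ipZr; case: (ip z k) => a b /=; rewrite !mul0r; lra.
by apply: Re_ip_eq0_of_min => t; rewrite scalerA; apply: z_min.
Qed.

Definition cauchy_seq (u : nat -> V) := forall e : R, 0 < e ->
  exists n0 : nat, forall m n : nat, (n0 <= m)%N -> (n0 <= n)%N -> nm (u m - u n) < e.

Definition cvg_to (u : nat -> V) (l : V) := forall e : R, 0 < e ->
  exists n0 : nat, forall n : nat, (n0 <= n)%N -> nm (u n - l) < e.

Let nm_complete : forall u, cauchy_seq u -> exists l, cvg_to u l.
Proof. by case: hH. Qed.

Section Riesz.
Variables (f : V -> C) (M : R).
Hypothesis flin : linear f.
Hypothesis M_ge0 : 0 <= M.
(* Bounding the real part suffices, as [Im (f x) = - Re (f ('i *: x))]. *)
Hypothesis f_bounded : forall x, `|Re (f x)| <= M * nm x.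

Lemma fZ a x : f (a *: x) = a * f x.
Proof. exact: (linZ flin). Qed.

Lemma functional_eq0 (w : C) :
  (forall e, 0 < e -> exists2 v, w = f v & nm v < e) -> w = 0.
Proof.
have small (v : V) e : nm v < e -> `|Re (f v)| <= M * e.
  by move=> /ltW lt_ve; apply: le_trans (f_bounded v) (ler_wpM2l M_ge0 lt_ve).
move=> w_small; apply: complexP; apply: (@normr_le_rate _ _ M) => k.
  by have [v -> /small] := w_small _ (rate_gt0 k).
have [v w_fv] := w_small _ (rate_gt0 k); rewrite -(nm_scalei v) => /small.
rewrite fZ -w_fv.
by case: (w) => a b /=; rewrite !mul0r sub0r mul1r normrN.
Qed.

Section UnitValue.
Variable x1 : V.
Hypothesis fx1 : f x1 = 1.

(* [d] is the distance from 0 to the hyperplane [f = 1]; a nearest point [z0]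
   is orthogonal to the kernel of [f]. *)
Let level : set V := [set x | f x = 1].
Let d := inf [set nm x | x in level].

Lemma nm_level_has_inf : has_inf [set nm x | x in level].
Proof. by split; [exists (nm x1), x1 | exists 0 => _ [y _ <-]; apply: nm_ge0]. Qed.

Lemma dist_level_le x : f x = 1 -> d <= nm x.
Proof. by move=> fx; apply: ge_inf; [case: nm_level_has_inf | exists x]. Qed.

Lemma dist_level_ge0 : 0 <= d.
Proof. by case: nm_level_has_inf => ne _; apply: lb_le_inf => // _ [y _ <-]; apply: nm_ge0. Qed.

Lemma dist_level_approx n : exists x, f x = 1 /\ nm x < d + rate n.
Proof. by have [_ [x fx <-]] := inf_adherent (rate_gt0 n) nm_level_has_inf; exists x. Qed.

Let xs n := proj1_sig (cid (dist_level_approx n)).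

Lemma f_xs n : f (xs n) = 1.
Proof. exact: (proj1 (proj2_sig (cid (dist_level_approx n)))). Qed.

Lemma nm_xs n : nm (xs n) < d + rate n.
Proof. exact: (proj2 (proj2_sig (cid (dist_level_approx n)))). Qed.

(* Parallelogram law: the midpoint of [xs m] and [xs n] lies on the hyperplane. *)
Lemma xs_sq_dist m n : nm (xs m - xs n) ^+ 2 <= (4 * d + 2) * (rate m + rate n).
Proof.
have mid : d <= nm ((2^-1 : R)%:C *: (xs m + xs n)).
  by apply: dist_level_le; rewrite fZ (linD flin) !f_xs mulrDr mulr1 half_add.
rewrite nmZ normc_real ger0_norm ?invr_ge0 // in mid.
have d_ge0 := dist_level_ge0.
have sq_mid : 4 * d ^+ 2 <= nm (xs m + xs n) ^+ 2.
  have := nm_ge0 (xs m + xs n); nra.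
have sq_xs k : nm (xs k) ^+ 2 <= d ^+ 2 + (2 * d + 1) * rate k.
  have le_k := ltW (nm_xs k); have := ler_pM (nm_ge0 _) (nm_ge0 _) le_k le_k.
  have := @rate_gt0 R k; have := @rate_le1 R k; rewrite expr2; nra.
have := sq_xs m; have := sq_xs n; have := nm_sqB (xs m) (xs n); have := nm_sqD (xs m) (xs n).
lra.
Qed.

Lemma xs_cauchy : cauchy_seq xs.
Proof.
move=> e e_gt0; have [n0 lt_n0] := rate_small (2 * (4 * d + 2)) _ (exprn_gt0 2 e_gt0).
exists n0 => m n le_m le_n; rewrite -(ltr_pXn2r (n := 2)) ?nnegrE ?nm_ge0 ?ltW //.
apply: le_lt_trans (xs_sq_dist m n) (le_lt_trans _ (lt_n0 n0 (leqnn n0))).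
have := rate_le (R:=R) le_m; have := rate_le (R:=R) le_n; have := dist_level_ge0; nra.
Qed.

Let z0 := proj1_sig (cid (nm_complete _ xs_cauchy)).

Lemma xs_cvg : cvg_to xs z0.
Proof. exact: (proj2_sig (cid (nm_complete _ xs_cauchy))). Qed.

Lemma f_z0 : f z0 = 1.
Proof.
apply/eqP; rewrite -subr_eq0; apply/eqP/functional_eq0 => e e_gt0.
have [n0 lt_n0] := xs_cvg _ e_gt0; exists (z0 - xs n0); last by rewrite nmBC lt_n0.
by rewrite (linB flin) f_xs.
Qed.

Lemma nm_z0_le : nm z0 <= d.
Proof.
rewrite -subr_le0; apply: (@ler_rate _ _ 2) => k.
have [n0 lt_n0] := xs_cvg _ (rate_gt0 k); set n := maxn k n0.
have := nmB (xs n) (xs n - z0); rewrite subKr.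
have := nm_xs n; have := lt_n0 n (leq_maxr _ _); have := rate_le (R:=R) (leq_maxl k n0).
lra.
Qed.

Lemma z0_orth k : f k = 0 -> ip k z0 = 0.
Proof.
move=> fk; apply: ip_eq0_of_min => c; apply: le_trans nm_z0_le (dist_level_le _ _).
by rewrite (linD flin) fZ fk mulr0 addr0 f_z0.
Qed.

Lemma riesz_unit : exists z, forall x, f x = ip x z.
Proof.
have nz0 : nm z0 ^+ 2 != 0.
  rewrite sqrf_eq0; apply/eqP => /nm_eq0 z0_eq0.
  by move: f_z0; rewrite z0_eq0 (lin0 flin) => /eqP; rewrite eq_sym oner_eq0.
exists ((nm z0 ^+ 2)^-1%:C *: z0) => x.
have /eqP : ip (x - f x *: z0) z0 = 0.
  by apply: z0_orth; rewrite (linB flin) fZ f_z0 mulr1 subrr.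
rewrite ipB ipZ ipxx subr_eq0 => /eqP ipx.
by rewrite ipZr conjc_real ipx mulrCA -rmorphM mulVf // mulr1.
Qed.

End UnitValue.

Lemma riesz_representation : exists z, forall x, f x = ip x z.
Proof.
have [[x fx_neq0]|f_eq0] := pselect (exists x, f x != 0).
  by apply: (@riesz_unit ((f x)^-1 *: x)); rewrite fZ mulVf.
exists 0 => x; rewrite ip0r; apply/eqP/negPn/negP => fx.
by apply: f_eq0; exists x.
Qed.

End Riesz.

Lemma adjoint_exists T : bounded_op ip T ->
  exists A : V -> V, forall x y, ip (T x) y = ip x (A y).
Proof.
move=> bT; have [M M_ge0 leM] := bounded_op_bound bT.
have rep y : exists z, forall x, ip (T x) y = ip x z.
  apply: (@riesz_representation (fun x => ip (T x) y) (M * nm y)).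
  - by move=> a x x'; rewrite (bounded_op_linear bT) ipDZl.
  - exact: mulr_ge0 (nm_ge0 y).
  - move=> x; apply: le_trans (Re_ip_le _ _) _.
    by rewrite mulrAC; apply: ler_wpM2r; [apply: nm_ge0 | apply: leM].
by have [A TA] := boolp.choice rep; exists A => x y; apply: TA.
Qed.

(* [adjoint] falls back to [T] itself when no adjoint exists; for bounded [T]
   this case is excluded by [adjoint_exists]. *)
Lemma adjointP {T} : bounded_op ip T -> forall x y, ip (T x) y = ip x (adjoint ip T y).
Proof.
move=> bT; rewrite /adjoint; case: pselect => [exA|[]]; last exact: adjoint_exists.
exact: (proj2_sig (cid exA)).
Qed.

Lemma adjoint_uniq T A : (forall x y, ip (T x) y = ip x (A y)) -> adjoint ip T = A.
Proof.
move=> TA; rewrite /adjoint; case: pselect => [exA|[]]; last by exists A.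
case: cid => B TB /=; apply: funext => y; apply/eqP; rewrite -subr_eq0; apply/eqP.
by apply: ipxx_eq0; rewrite ipBr -TB -TA subrr.
Qed.

Lemma self_adjoint_sym {T} : bounded_op ip T -> self_adjoint_op ip T ->
  forall x y, ip (T x) y = ip x (T y).
Proof. by move=> bT saT x y; rewrite adjointP // saT. Qed.

Lemma opnorm_le1 {T} : bounded_op ip T -> opnorm ip T <= 1 -> forall x, nm (T x) <= nm x.
Proof.
move=> bT T1; have [M M_ge0 leM] := bounded_op_bound bT.
have T_ball x : nm x <= 1 -> nm (T x) <= 1.
  move=> x1; apply: le_trans T1; apply: sup_upper_bound; last by exists x.
  split; first by exists (nm (T 0)), 0 => //=; rewrite nm0 ler01.
  by exists M => _ [y y1 <-]; apply: le_trans (leM y) _; rewrite ler_piMr.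
move=> x; have [x0|nx_neq0] := eqVneq (nm x) 0.
  by rewrite (nm_eq0 _ x0) (lin0 (bounded_op_linear bT)) nm0.
have nx_gt0 : 0 < nm x by rewrite lt_neqAle eq_sym nx_neq0 nm_ge0.
have := T_ball ((nm x)^-1%:C *: x).
rewrite (linZ (bounded_op_linear bT)) !nmZ normc_real ger0_norm ?invr_ge0 ?nm_ge0 //.
by rewrite mulVf // lexx ler_pdivrMl // mulr1 => /(_ isT).
Qed.

Lemma eq_of_nm_le_rate x y K : (forall n, nm (x - y) <= K * rate n) -> x = y.
Proof.
move=> le_xy; apply/eqP; rewrite -subr_eq0; apply/eqP/nm_eq0.
by apply: (@normr_le_rate _ _ K) => n; rewrite ger0_norm ?nm_ge0.
Qed.

Section OperatorLimit.
Context {A : nat -> V -> V} {K : R}.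
Hypothesis K_ge0 : 0 <= K.
Hypothesis A_cauchy : forall m n x, (m <= n)%N -> nm (A n x - A m x) <= K * rate m * nm x.

Lemma op_limit_exists x : exists l, cvg_to (A^~ x) l.
Proof.
apply: nm_complete => e e_gt0; have [n0 lt_n0] := rate_small (K * nm x) _ e_gt0.
have lt_e m n : (n0 <= m)%N -> (m <= n)%N -> nm (A n x - A m x) < e.
  move=> le_n0m le_mn; apply: le_lt_trans (A_cauchy _ _ x le_mn) _.
  apply: le_lt_trans (lt_n0 n0 (leqnn n0)); rewrite mulrAC.
  by apply: ler_wpM2l; [apply: mulr_ge0 K_ge0 (nm_ge0 x) | apply: rate_le].
exists n0 => m n le_m le_n; have [le_mn|/ltnW le_nm] := leqP m n.
  by rewrite nmBC; apply: lt_e.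
exact: lt_e.
Qed.

Definition op_limit x := proj1_sig (cid (op_limit_exists x)).

Lemma op_limitP x : cvg_to (A^~ x) (op_limit x).
Proof. exact: (proj2_sig (cid (op_limit_exists x))). Qed.

Lemma op_limit_dist n x : nm (A n x - op_limit x) <= K * rate n * nm x.
Proof.
rewrite -subr_le0; apply: (@ler_rate _ _ 1) => k.
have [n0 lt_n0] := op_limitP x _ (rate_gt0 k).
have := nm_tri (A n x) (A (maxn n n0) x) (op_limit x).
rewrite (nmBC (A n x) (A (maxn n n0) x)).
have := A_cauchy _ _ x (leq_maxl n n0); have := lt_n0 _ (leq_maxr n n0).
lra.
Qed.

Lemma op_limit_distC n x : nm (op_limit x - A n x) <= K * rate n * nm x.
Proof. by rewrite nmBC op_limit_dist. Qed.

Lemma op_limit_linear : (forall n, linear (A n)) -> linear op_limit.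
Proof.
move=> A_lin a x y; set z := a *: x + y.
apply: (@eq_of_nm_le_rate _ _ (K * (nm z + normc a * nm x + nm y))) => n.
have -> : op_limit z - (a *: op_limit x + op_limit y) = (op_limit z - A n z)
    + (a *: (A n x - op_limit x) + (A n y - op_limit y)).
  by rewrite {2}/z (A_lin n) scalerBr (addrACA (a *: A n x)) -opprD subrKA.
have := nmD (op_limit z - A n z) (a *: (A n x - op_limit x) + (A n y - op_limit y)).
have := nmD (a *: (A n x - op_limit x)) (A n y - op_limit y); rewrite nmZ.
have := ler_wpM2l (normc_ge0 a) (op_limit_dist n x).
have := op_limit_distC n z; have := op_limit_dist n y.
lra.
Qed.

Lemma op_limit_sym : (forall n x y, ip (A n x) y = ip x (A n y)) ->
  forall x y, ip (op_limit x) y = ip x (op_limit y).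
Proof.
move=> A_sym x y; apply/eqP; rewrite -subr_eq0; apply/eqP.
have split_n n : ip (op_limit x) y - ip x (op_limit y)
    = ip (op_limit x - A n x) y + ip x (A n y - op_limit y).
  by rewrite ipB ipBr A_sym addrA subrK.
have small n : nm (op_limit x - A n x) * nm y + nm x * nm (A n y - op_limit y)
    <= 2 * K * nm x * nm y * rate n.
  have := ler_wpM2r (nm_ge0 y) (op_limit_distC n x).
  have := ler_wpM2l (nm_ge0 x) (op_limit_dist n y); lra.
apply: complexP; apply: (@normr_le_rate _ _ (2 * K * nm x * nm y)) => n.
  rewrite (split_n n) ReD; apply: le_trans (ler_normD _ _) (le_trans _ (small n)).
  by apply: lerD; apply: Re_ip_le.
rewrite (split_n n) ImD; apply: le_trans (ler_normD _ _) (le_trans _ (small n)).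
by apply: lerD; apply: Im_ip_le.
Qed.

Lemma op_limit_comm S : linear S -> (forall x, nm (S x) <= nm x) ->
  (forall n x, S (A n x) = A n (S x)) -> forall x, S (op_limit x) = op_limit (S x).
Proof.
move=> S_lin S_contr A_comm x; apply: (@eq_of_nm_le_rate _ _ (2 * K * nm x)) => n.
have -> : S (op_limit x) - op_limit (S x)
    = S (op_limit x - A n x) + (A n (S x) - op_limit (S x)).
  by rewrite (linB S_lin) -A_comm addrA subrK.
apply: le_trans (nmD _ _) _.
have := S_contr (op_limit x - A n x); have := op_limit_distC n x.
have := op_limit_dist n (S x).
have := ler_wpM2l (mulr_ge0 K_ge0 (rate_ge0 n)) (S_contr x).
lra.
Qed.

Hypothesis A_contr : forall n x, nm (A n x) <= nm x.

Lemma op_limit_contr x : nm (op_limit x) <= nm x.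
Proof.
rewrite -subr_le0; apply: (@ler_rate _ _ (K * nm x)) => n.
have := nmB (A n x) (A n x - op_limit x); rewrite subKr.
have := A_contr n x; have := op_limit_dist n x; lra.
Qed.

Lemma op_limit_sq_dist n x : (forall n, linear (A n)) ->
  nm (op_limit (op_limit x) - A n (A n x)) <= 2 * K * rate n * nm x.
Proof.
move=> A_lin.
have -> : op_limit (op_limit x) - A n (A n x)
    = (op_limit (op_limit x) - A n (op_limit x)) + A n (op_limit x - A n x).
  by rewrite (linB (A_lin n)) addrA subrK.
apply: le_trans (nmD _ _) _.
have := op_limit_distC n (op_limit x); have := A_contr n (op_limit x - A n x).
have := op_limit_distC n x; have := op_limit_contr x.
have := ler_wpM2l (mulr_ge0 K_ge0 (rate_ge0 n)) (op_limit_contr x).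
lra.
Qed.

End OperatorLimit.

Section SquareRoot.
Context {S : V -> V}.
Hypothesis S_lin : linear S.
Hypothesis S_sym : forall x y, ip (S x) y = ip x (S y).
Hypothesis S_contr : forall x, nm (S x) <= nm x.

Local Notation half := ((2^-1 : R)%:C).

Fixpoint sqrt_iter (n : nat) : V -> V :=
  if n is n'.+1 then fun x => half *: (S (S x) + sqrt_iter n' (sqrt_iter n' x))
  else fun=> 0.

(* The limit [sqrt_lim] is [1 - sqrt (1 - S^2)], see [sqrt_compl_sq]. *)
Local Notation Y := sqrt_iter.
Local Notation b := (@iter_bound R).

Lemma sqrt_iterS n x : Y n.+1 x = half *: (S (S x) + Y n (Y n x)).
Proof. by []. Qed.

Lemma sqrt_iter_linear n : linear (Y n).
Proof.
elim: n => [a x y|n IH a x y] /=; first by rewrite scaler0 addr0.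
rewrite !(S_lin, IH) addrACA scalerDr; congr (_ + _).
by rewrite -scalerDr !scalerA mulrC.
Qed.

Lemma sqrt_iter_bound n x : nm (Y n x) <= b n * nm x.
Proof.
elim: n x => [|n IH] x /=; first by rewrite nm0 mul0r.
rewrite nmZ normc_real ger0_norm ?invr_ge0 // -mulrA ler_wpM2l ?invr_ge0 //.
apply: le_trans (nmD _ _) _; rewrite mulrDl mul1r; apply: lerD.
  exact: le_trans (S_contr _) (S_contr _).
apply: le_trans (IH _) _; rewrite expr2 -mulrA.
by apply: ler_wpM2l; [apply: iter_bound_ge0 | apply: IH].
Qed.

Lemma sqrt_iter_contr n x : nm (Y n x) <= nm x.
Proof.
apply: le_trans (sqrt_iter_bound n x) _.
by rewrite ler_piMl ?nm_ge0 ?iter_bound_le1.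
Qed.

Lemma sqrt_iter_step n x : nm (Y n.+1 x - Y n x) <= (b n.+1 - b n) * nm x.
Proof.
elim: n x => [|n IH] x.
  rewrite /= !subr0 addr0 nmZ normc_real ger0_norm ?invr_ge0 //.
  by rewrite expr0n /= addr0 mulr1 ler_wpM2l ?invr_ge0 // (le_trans (S_contr _) (S_contr _)).
have -> : Y n.+2 x - Y n.+1 x = half *: (Y n.+1 (Y n.+1 x) - Y n (Y n x)).
  by rewrite (sqrt_iterS n.+1) [in X in _ - X](sqrt_iterS n) -scalerBr opprD addrACA subrr add0r.
have -> : Y n.+1 (Y n.+1 x) - Y n (Y n x)
    = Y n.+1 (Y n.+1 x - Y n x) + (Y n.+1 (Y n x) - Y n (Y n x)).
  by rewrite (linB (sqrt_iter_linear _)) addrA subrK.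
rewrite nmZ normc_real ger0_norm ?invr_ge0 //.
have step1 : nm (Y n.+1 (Y n.+1 x - Y n x)) <= b n.+1 * ((b n.+1 - b n) * nm x).
  apply: le_trans (sqrt_iter_bound _ _) _.
  by apply: ler_wpM2l; [apply: iter_bound_ge0 | apply: IH].
have step2 : nm (Y n.+1 (Y n x) - Y n (Y n x)) <= (b n.+1 - b n) * (b n * nm x).
  apply: le_trans (IH _) _.
  by apply: ler_wpM2l; [rewrite subr_ge0; apply: iter_bound_le_succ | apply: sqrt_iter_bound].
have -> : (b n.+2 - b n.+1) * nm x
    = 2^-1 * (b n.+1 * ((b n.+1 - b n) * nm x) + (b n.+1 - b n) * (b n * nm x)).
  by rewrite [b n.+2]/= [b n.+1]/=; ring.
by apply: ler_wpM2l; [rewrite invr_ge0 | apply: le_trans (nmD _ _) (lerD step1 step2)].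
Qed.

Lemma sqrt_iter_cauchy m n x : (m <= n)%N ->
  nm (Y n x - Y m x) <= 2 * rate m * nm x.
Proof.
move=> le_mn; apply: (@le_trans _ _ ((b n - b m) * nm x)).
  rewrite -(subnKC le_mn); elim: (n - m)%N => [|k IH].
    by rewrite addn0 !subrr nm0 mul0r.
  rewrite addnS; apply: le_trans (nm_tri _ (Y (m + k) x) _) _.
  by apply: le_trans (lerD (sqrt_iter_step _ x) IH) _; rewrite -mulrDl addrA subrK.
apply: ler_wpM2r; first exact: nm_ge0.
by have := iter_bound_rate (R := R) m; have := iter_bound_le1 (R := R) n; lra.
Qed.

Lemma sqrt_iter_sym n x y : ip (Y n x) y = ip x (Y n y).
Proof.
elim: n x y => [|n IH] x y; first by rewrite ip0l ip0r.
by rewrite !sqrt_iterS ipZ ipZr conjc_real ipD ipDr !S_sym !IH.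
Qed.

Lemma sqrt_iter_comm n x : S (Y n x) = Y n (S x).
Proof.
elim: n x => [|n IH] x; first exact: lin0 S_lin.
by rewrite !sqrt_iterS (linZ S_lin) (linD S_lin) !IH.
Qed.

Let two_ge0 : 0 <= 2 :> R. Proof. by []. Qed.

Definition sqrt_lim : V -> V := op_limit two_ge0 sqrt_iter_cauchy.

Lemma sqrt_lim_linear : linear sqrt_lim.
Proof. exact: (op_limit_linear two_ge0 sqrt_iter_cauchy sqrt_iter_linear). Qed.

Lemma sqrt_lim_contr x : nm (sqrt_lim x) <= nm x.
Proof. exact: (op_limit_contr two_ge0 sqrt_iter_cauchy sqrt_iter_contr x). Qed.

Lemma sqrt_lim_sym x y : ip (sqrt_lim x) y = ip x (sqrt_lim y).
Proof. exact: (op_limit_sym two_ge0 sqrt_iter_cauchy sqrt_iter_sym). Qed.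

Lemma sqrt_lim_comm x : S (sqrt_lim x) = sqrt_lim (S x).
Proof. exact: (op_limit_comm two_ge0 sqrt_iter_cauchy _ S_lin S_contr sqrt_iter_comm). Qed.

Lemma sqrt_lim_fixed x : S (S x) + sqrt_lim (sqrt_lim x) = sqrt_lim x + sqrt_lim x.
Proof.
apply: (@eq_of_nm_le_rate _ _ (8 * nm x)) => n.
have halves : S (S x) + Y n (Y n x) = Y n.+1 x + Y n.+1 x.
  by rewrite sqrt_iterS -scalerDl half_add scale1r.
apply: le_trans (nm_tri _ (S (S x) + Y n (Y n x)) _) _.
rewrite (addrC (S (S x))) addrKA halves opprD addrACA.
have := op_limit_sq_dist two_ge0 sqrt_iter_cauchy sqrt_iter_contr n x sqrt_iter_linear.
have := nmD (Y n.+1 x - sqrt_lim x) (Y n.+1 x - sqrt_lim x).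
have := op_limit_dist two_ge0 sqrt_iter_cauchy n.+1 x.
have := ler_wpM2r (nm_ge0 x) (rate_le (R := R) (leqnSn n)).
rewrite -/sqrt_lim; lra.
Qed.

Definition sqrt_compl x := x - sqrt_lim x.

Lemma sqrt_compl_linear : linear sqrt_compl.
Proof. by move=> a x y; rewrite /sqrt_compl sqrt_lim_linear scalerBr opprD addrACA. Qed.

Lemma sqrt_compl_sym x y : ip (sqrt_compl x) y = ip x (sqrt_compl y).
Proof. by rewrite ipB ipBr sqrt_lim_sym. Qed.

Lemma sqrt_compl_comm x : S (sqrt_compl x) = sqrt_compl (S x).
Proof. by rewrite (linB S_lin) sqrt_lim_comm. Qed.

Lemma sqrt_compl_bound x : nm (sqrt_compl x) <= 2 * nm x.
Proof. by apply: le_trans (nmB _ _) _; rewrite mulr2n mulrDl mul1r lerD2l sqrt_lim_contr. Qed.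

Lemma sqrt_compl_sq x : sqrt_compl (sqrt_compl x) = x - S (S x).
Proof.
have -> : S (S x) = sqrt_lim x + sqrt_lim x - sqrt_lim (sqrt_lim x).
  by rewrite -sqrt_lim_fixed addrK.
by rewrite /sqrt_compl (linB sqrt_lim_linear) opprB addrACA [in RHS]opprB opprD -addrA.
Qed.

Lemma sqrt_compl_bounded : bounded_op ip sqrt_compl.
Proof. by split; [apply: sqrt_compl_linear | exists 2; apply: sqrt_compl_bound]. Qed.

Lemma S_bounded : bounded_op ip S.
Proof. by split=> //; exists 1 => x; rewrite mul1r. Qed.

Definition unitary_lift := op_add S (op_scale 'i%C sqrt_compl).

Lemma adjoint_unitary_lift : adjoint ip unitary_lift = op_sub S (op_scale 'i%C sqrt_compl).
Proof.
apply: adjoint_uniq => x y.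
by rewrite ipD ipBr ipZ ipZr conjc_i S_sym sqrt_compl_sym mulNr opprK.
Qed.

Lemma unitary_lift_unitary : unitary ip unitary_lift.
Proof.
have R_lin := sqrt_compl_linear.
split; first by apply/bounded_op_add/bounded_op_scale/sqrt_compl_bounded/S_bounded.
rewrite adjoint_unitary_lift /unitary_lift /op_comp /op_add /op_sub /op_scale.
split; apply: funext => x.
  rewrite (linD S_lin) (linZ S_lin) (linD R_lin) (linZ R_lin) sqrt_compl_comm.
  by rewrite (scalerDr 'i%C (sqrt_compl (S x))) scalerA mulii scaleN1r addrKA opprK sqrt_compl_sq subrKC.
rewrite (linB S_lin) (linZ S_lin) (linB R_lin) (linZ R_lin) sqrt_compl_comm.
by rewrite (scalerBr 'i%C (sqrt_compl (S x))) scalerA mulii scaleN1r opprK subrKA sqrt_compl_sq subrKC.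
Qed.

Lemma ReOp_unitary_lift : ReOp ip unitary_lift = S.
Proof.
rewrite /ReOp adjoint_unitary_lift; apply: funext => x.
rewrite /op_scale /op_add /op_sub addrACA subrr addr0.
by rewrite scalerDr -scalerDl halfDhalf scale1r.
Qed.

Lemma ReOp_unitary_exists :
  exists U, [/\ unitary ip U, bounded_op ip (adjoint ip U) & S = ReOp ip U].
Proof.
exists unitary_lift; split; [exact: unitary_lift_unitary | | by rewrite ReOp_unitary_lift].
by rewrite adjoint_unitary_lift; exact/bounded_op_sub/bounded_op_scale/sqrt_compl_bounded/S_bounded.
Qed.

End SquareRoot.

Lemma contraction_ReOp_unitary {S} :
  bounded_op ip S -> self_adjoint_op ip S -> opnorm ip S <= 1 ->
  exists U, [/\ unitary ip U, bounded_op ip (adjoint ip U) & S = ReOp ip U].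
Proof.
move=> bS saS S1.
exact: (ReOp_unitary_exists (bounded_op_linear bS) (self_adjoint_sym bS saS) (opnorm_le1 bS S1)).
Qed.

Lemma ReOp_self_adjoint T : self_adjoint_op ip T -> ReOp ip T = T.
Proof.
move=> saT; rewrite /ReOp saT; apply: funext => x.
by rewrite /op_scale /op_add scalerDr -scalerDl halfDhalf scale1r.
Qed.

Lemma ReOp_scale {A s} e : (forall x y, ip (A x) y = ip x (s *: A y)) ->
  ReOp ip (op_scale e A) = op_scale (2%:R^-1 * (e + conjc e * s)) A.
Proof.
move=> A_adj; rewrite /ReOp (@adjoint_uniq _ (op_scale (conjc e * s) A)); last first.
  by move=> x y; rewrite /op_scale ipZ A_adj !ipZr rmorphM /= conjcK mulrA.
by apply: funext => x; rewrite /op_scale /op_add -scalerDl scalerA.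
Qed.

Section NormEstimates.
Context {N : (V -> V) -> R}.
Hypothesis N_norm : is_norm_on_B ip N.

Lemma N_scale a T : bounded_op ip T -> N (op_scale a T) = normc a * N T.
Proof. by case: N_norm => _ _ NZ _; apply: NZ. Qed.

Lemma N_add_le {T S} : bounded_op ip T -> bounded_op ip S -> N (op_add T S) <= N T + N S.
Proof. by case: N_norm => _ _ _ ND; apply: ND. Qed.

Lemma N_sub_le {T S} : bounded_op ip T -> bounded_op ip S -> N (op_sub T S) <= N T + N S.
Proof.
move=> bT bS; rewrite op_subE; apply: le_trans (N_add_le bT (bounded_op_scale _ bS)) _.
by rewrite N_scale // normcN1 mul1r.
Qed.

Lemma N_ReOp_le {U} : bounded_op ip U -> bounded_op ip (adjoint ip U) ->
  N (ReOp ip U) <= 2^-1 * (N U + N (adjoint ip U)).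
Proof.
move=> bU bU'; rewrite /ReOp N_scale ?normc_half; last exact: bounded_op_add.
by rewrite ler_pM2l ?invr_gt0 // N_add_le.
Qed.

Lemma N_ReOp_scale_le {A s e} : bounded_op ip A ->
  (forall x y, ip (A x) y = ip x (s *: A y)) -> normc s = 1 -> normc e = 1 ->
  N (ReOp ip (op_scale e A)) <= N A.
Proof.
move=> bA A_adj s1 e1; rewrite (ReOp_scale e A_adj) N_scale //.
case: N_norm => N_ge0 _ _ _; rewrite ler_piMl ?N_ge0 //.
rewrite Normc.normcM normc_half.
have half_ge0 : 0 <= 2^-1 :> R by rewrite invr_ge0.
apply: le_trans (ler_wpM2l half_ge0 (le_normcD _ _)) _.
by rewrite Normc.normcM normc_conj e1 s1 mulr1 mulrDr mulr1 halfDhalf.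
Qed.

Lemma wN_le_N {A s} : bounded_op ip A ->
  (forall x y, ip (A x) y = ip x (s *: A y)) -> normc s = 1 -> (wN ip N A <= (N A)%:E)%E.
Proof.
move=> bA A_adj s1; apply: ge_ereal_sup => _ [t _ <-].
by rewrite lee_fin (N_ReOp_scale_le bA A_adj s1 (normc_expi t)).
Qed.

Lemma N_le_wN {T} : self_adjoint_op ip T -> ((N T)%:E <= wN ip N T)%E.
Proof.
move=> saT; apply: ereal_sup_ubound; exists 0 => //.
have -> : op_scale (expi 0) T = T.
  by apply: funext => x; rewrite /expi cos0 sin0 /op_scale scale1r.
by rewrite ReOp_self_adjoint.
Qed.

Lemma N_le_unitary_mean {S} : bounded_op ip S -> self_adjoint_op ip S -> opnorm ip S <= 1 ->
  exists2 U, unitary ip U & 2 * N S <= N U + N (adjoint ip U).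
Proof.
move=> bS saS S1; have [U [uU bU' eS]] := contraction_ReOp_unitary bS saS S1.
by exists U => //; rewrite eS; have := N_ReOp_le uU.1 bU'; lra.
Qed.

End NormEstimates.

Section Anticommutator.
Context {N : (V -> V) -> R} {T S : V -> V}.
Hypothesis N_alg : algebra_norm ip N.
Hypotheses (bT : bounded_op ip T) (bS : bounded_op ip S).
Hypotheses (saT : self_adjoint_op ip T) (saS : self_adjoint_op ip S).
Hypotheses (T1 : opnorm ip T <= 1) (S1 : opnorm ip S <= 1).

Lemma N_anticomm_le :
  N (op_add (op_comp T S) (op_comp S T)) <= 2 * N T * N S /\
  N (op_sub (op_comp T S) (op_comp S T)) <= 2 * N T * N S.
Proof.
case: N_alg => N_norm NM.
have bTS := bounded_op_comp bT bS; have bST := bounded_op_comp bS bT.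
have := NM _ _ bT bS; have := NM _ _ bS bT.
have := N_add_le N_norm bTS bST; have := N_sub_le N_norm bTS bST.
by split; lra.
Qed.

Lemma wN_anticomm_le :
  (wN ip N (op_add (op_comp T S) (op_comp S T)) <= (2 * N T * N S)%:E)%E /\
  (wN ip N (op_sub (op_comp T S) (op_comp S T)) <= (2 * N T * N S)%:E)%E.
Proof.
have [N_norm _] := N_alg; have [NA NB] := N_anticomm_le.
have T_sym := self_adjoint_sym bT saT; have S_sym := self_adjoint_sym bS saS.
have bTS := bounded_op_comp bT bS; have bST := bounded_op_comp bS bT.
have add_adj x y : ip (op_add (op_comp T S) (op_comp S T) x) y
    = ip x (1 *: op_add (op_comp T S) (op_comp S T) y).
  by rewrite scale1r /op_add /op_comp ipD ipDr !T_sym !S_sym !T_sym addrC.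
have sub_adj x y : ip (op_sub (op_comp T S) (op_comp S T) x) y
    = ip x ((-1) *: op_sub (op_comp T S) (op_comp S T) y).
  by rewrite scaleN1r /op_sub /op_comp opprB ipB ipBr !T_sym !S_sym !T_sym.
split.
  apply: le_trans (wN_le_N N_norm (bounded_op_add bTS bST) add_adj (Normc.normc1 _)) _.
  by rewrite lee_fin.
apply: le_trans (wN_le_N N_norm (bounded_op_sub bTS bST) sub_adj normcN1) _.
by rewrite lee_fin.
Qed.

Lemma wN_le_min_supU_sum A : (wN ip N A <= (2 * N T * N S)%:E)%E ->
  (wN ip N A <= Order.min (wN ip N T) (wN ip N S) * supU_sum ip N)%E.
Proof.
move=> wA; have [[N_ge0 _ _ _] _] := N_alg.
have NT0 := N_ge0 _ bT; have NS0 := N_ge0 _ bS.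
have [U uU NS] := N_le_unitary_mean N_alg.1 bS saS S1.
have [W uW NT] := N_le_unitary_mean N_alg.1 bT saT T1.
have sU : ((N U + N (adjoint ip U))%:E <= supU_sum ip N)%E.
  by apply: ereal_sup_ubound; exists U.
have sW : ((N W + N (adjoint ip W))%:E <= supU_sum ip N)%E.
  by apply: ereal_sup_ubound; exists W.
apply: (lee_min_mul (N_le_wN saT) (N_le_wN saS) sU sW) => //.
1,2: lra.
1,2: by apply: le_trans wA _; rewrite lee_fin; nra.
Qed.

Lemma wN_le_min_supU A : self_adjoint_norm ip N -> (wN ip N A <= (2 * N T * N S)%:E)%E ->
  (wN ip N A <= 2%:E * (Order.min (N T) (N S))%:E * supU ip N)%E.
Proof.
move=> N_sa wA; have [[N_ge0 _ _ _] _] := N_alg.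
have NT0 := N_ge0 _ bT; have NS0 := N_ge0 _ bS.
have [U uU] := N_le_unitary_mean N_alg.1 bS saS S1; rewrite (N_sa _ uU.1) => NS.
have [W uW] := N_le_unitary_mean N_alg.1 bT saT T1; rewrite (N_sa _ uW.1) => NT.
rewrite -EFinM minr_pMr // EFin_min.
have sU : ((N U)%:E <= supU ip N)%E by apply: ereal_sup_ubound; exists U.
have sW : ((N W)%:E <= supU ip N)%E by apply: ereal_sup_ubound; exists W.
apply: (lee_min_mul (lexx _) (lexx _) sU sW); rewrite ?mulr_ge0 //.
1,2: lra.
1,2: by apply: le_trans wA _; rewrite lee_fin; nra.
Qed.

End Anticommutator.

End Hilbert.

Theorem theorem2p6 (R : realType) (V : lmodType R[i]) (ip : V -> V -> R[i])
  (hH : is_hilbert ip) (N : (V -> V) -> R)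
  (hNalg : algebra_norm ip N) (hNwui : weakly_unitarily_invariant ip N)
  (T S : V -> V) (hT : bounded_op ip T) (hS : bounded_op ip S)
  (hTsa : self_adjoint_op ip T) (hSsa : self_adjoint_op ip S)
  (hT1 : opnorm ip T <= 1) (hS1 : opnorm ip S <= 1) :
  ((wN ip N (op_add (op_comp T S) (op_comp S T))
     <= Order.min (wN ip N T) (wN ip N S) * supU_sum ip N)%E /\
   (wN ip N (op_sub (op_comp T S) (op_comp S T))
     <= Order.min (wN ip N T) (wN ip N S) * supU_sum ip N)%E) /\
  (self_adjoint_norm ip N ->
   (wN ip N (op_add (op_comp T S) (op_comp S T))
     <= 2%:E * (Order.min (N T) (N S))%:E * supU ip N)%E /\
   (wN ip N (op_sub (op_comp T S) (op_comp S T))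
     <= 2%:E * (Order.min (N T) (N S))%:E * supU ip N)%E).
Proof.
have [wA wB] := wN_anticomm_le hH hNalg hT hS hTsa hSsa.
have min_sum := wN_le_min_supU_sum hH hNalg hT hS hTsa hSsa hT1 hS1.
have min_sup := wN_le_min_supU hH hNalg hT hS hTsa hSsa hT1 hS1.
split; first by split; apply: min_sum.
by move=> N_sa; split; apply: min_sup.
Qed.
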